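(* Let $2\le j<k$ be integers and consider the election $E(j,k)$ and the committee $W=D_{k-2}\cup\{x,a\}$. Then (1) $\Delta(W,a,b)=\delta(j,k)$, where $\delta(j,k)=\frac{j!}{\prod_{j'=0}^{j}(k-j')}$; and (2) every voter $v$ of $E(j,k)$ satisfies $|A_v\cap W|\ge k-(j+1)$.
   Context: An approval election is a tuple $(N,C,(A_v)_{v\in N},k)$ with voters $N$, candidates $C$, ballots $A_v\subseteq C$ and target committee size $k$. The PAV score of $W\subseteq C$ is $\textsc{pavsc}(W)=\sum_{v\in N}\sum_{i=1}^{|A_v\cap W|}\frac1i$, and $\Delta(W,a,b)=\textsc{pavsc}((W\setminus\{a\})\cup\{b\})-\textsc{pavsc}(W)$. Let $D_\ell=\{d_1,\dots,d_\ell\}$ denote a set of dummy candidates ($D_0=\varnothing$, $D_\ell\subseteq D_{\ell+1}$). Elections $F(j,k)$, for $1\le j<k$, with candidate set $D_{k-1}\cup\{a,b\}$ and committee size $k$, are defined recursively. $F(1,k)$ has two voters with ballots $D_{k-1}\cup\{a\}$ and $D_{k-2}\cup\{b\}$. For $j>1$, take a copy of $F(j-1,k)$ with candidates $D_{k-1}\cup\{a_1,b_1\}$ and a copy of $F(j-1,k-1)$ with candidates $D_{k-2}\cup\{a_2,b_2\}$, with disjoint voter sets; in every ballot of the first copy replace $a_1$ by $b$ and $b_1$ by $a$, in every ballot of the second copy replace $a_2$ by $a$ and $b_2$ by $b$; $F(j,k)$ has the union of the two voter sets with these ballots, candidates $D_{k-1}\cup\{a,b\}$, and committee size $k$. The election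 $E(j,k)$ (for $2\le j<k$) is defined as follows: take two copies of $F(j-1,k-1)$ with disjoint voter sets $N_1,N_2$ and candidates $D_{k-2}\cup\{a_1,b_1\}$ and $D_{k-2}\cup\{a_2,b_2\}$ respectively; in ballots of voters in $N_1$ replace $a_1$ by $b$ and $b_1$ by $a$ and add a new candidate $x$; in ballots of voters in $N_2$ replace $a_2$ by $a$ and $b_2$ by $b$ and add a new candidate $y$. $E(j,k)$ has voters $N_1\cup N_2$, candidates $D_{k-2}\cup\{x,y,a,b\}$ and committee size $k$. *)

From HB Require Import structures.
From mathcomp Require Import all_boot all_order all_algebra.
Set Implicit Arguments. Unset Strict Implicit. Unset Printing Implicit Defensive.
Import Order.TTheory GRing.Theory Num.Theory.

(* Candidates: dummies d_i (i >= 1), and a, b, x, y. *)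
Inductive cand := Dum of nat | CA | CB | CX | CY.

Definition cand_eqb (c d : cand) : bool :=
  match c, d with
  | Dum i, Dum j => i == j
  | CA, CA | CB, CB | CX, CX | CY, CY => true
  | _, _ => false
  end.

Lemma cand_eqP : Equality.axiom cand_eqb.
Proof.
case=> [i||||] [j||||] /=; try by constructor.
by apply: (iffP eqP) => [->|[]].
Qed.

HB.instance Definition _ := hasDecEq.Build cand cand_eqP.

(* A ballot is the (finite) set of approved candidates, given as a list;
   an election's voters are given as a list of ballots (one per voter). *)
Definition ballot := seq cand.
Definition election := seq ballot.

Definition D (l : nat) : seq cand := [seq Dum i | i <- iota 1 l].

Definition swapab (c : cand) : cand :=
  match c with CA => CB | CB => CA | c => c end.

(* F(j,k): recursion on j; F(1,k) = two voters D_{k-1} u {a}, D_{k-2} u {b};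
   F(j,k) = (copy of F(j-1,k) with a1->b, b1->a) ++ (copy of F(j-1,k-1) with
   a2->a, b2->b). Value at j = 0 is irrelevant (never used for j >= 1). *)
Fixpoint F (j k : nat) : election :=
  match j with
  | 0 => [::]
  | j'.+1 =>
    match j' with
    | 0 => [:: CA :: D k.-1; CB :: D k.-2]
    | _ => [seq map swapab A | A <- F j' k] ++ F j' k.-1
    end
  end.

Definition E (j k : nat) : election :=
  [seq CX :: map swapab A | A <- F j.-1 k.-1] ++
  [seq CY :: A | A <- F j.-1 k.-1].

Definition inter_size (A W : seq cand) : nat :=
  size (undup [seq c <- W | c \in A]).

Local Open Scope ring_scope.

Definition harm (n : nat) : rat := \sum_(1 <= i < n.+1) (i%:R)^-1.

Definition pavsc (El : election) (W : seq cand) : rat :=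
  \sum_(A <- El) harm (inter_size A W).

Definition swap_in (W : seq cand) (a b : cand) : seq cand :=
  b :: [seq c <- W | c != a].

Definition Delta (El : election) (W : seq cand) (a b : cand) : rat :=
  pavsc El (swap_in W a b) - pavsc El W.

Definition delta (j k : nat) : rat :=
  (j`!)%:R / (\prod_(0 <= j' < j.+1) (k - j')%N)%:R.

(* Every ballot of F(j,k) is {c} ∪ D_m with c ∈ {a,b} and k-1-j <= m <= k-1.
   If such a voter approves t further members of a committee containing a and
   D_m, replacing a by b changes its PAV score by -1/(m+1+t) if c = a and by
   1/(m+1+t) if c = b. Summed over F(j,k) these changes give δ(j,k+t), by
   induction on j using δ(j+1,n) = δ(j,n-1) - δ(j,n). The voters of E(j,k) are
   those of F(j-1,k-1) with a, b exchanged and x added (t = 1) or with y added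
   (t = 0), so Δ(W,a,b) = δ(j-1,k-1) - δ(j-1,k) = δ(j,k). The bound on
   |A_v ∩ W| is the length m of the dummy segment shared by A_v and W. *)

From mathcomp Require Import all_boot all_order all_algebra.
From mathcomp Require Import ring zify.
Set Implicit Arguments. Unset Strict Implicit. Unset Printing Implicit Defensive.
Import Order.TTheory GRing.Theory Num.Theory.
Local Open Scope ring_scope.

Lemma delta_ffact j n : delta j n = j`!%:R / (n ^_ j.+1)%:R.
Proof. by rewrite /delta ffact_prod big_mkord. Qed.

(* delta j n is the Beta integral of x^j (1-x)^(n-j-1) over [0,1]; the recurrence
   comes from x^(j+1) (1-x)^(n-j-2) = x^j (1-x)^(n-j-2) - x^j (1-x)^(n-j-1). *)
Lemma delta_rec j n : (j.+1 < n)%N -> delta j.+1 n = delta j n.-1 - delta j n.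
Proof.
case: n => // p lt_j1_p; rewrite !delta_ffact /= !ffactSS ffactnSr.
have P_gt0 : (0 < p ^_ j)%N by rewrite ffact_gt0; lia.
have q_gt0 : (0 < p - j)%N by lia.
have -> : p.+1 = ((p - j) + j.+1)%N by lia.
move: (p ^_ j)%N (p - j)%N P_gt0 q_gt0 => P q P_gt0 q_gt0.
have nz n : (0 < n)%N -> n%:R != 0 :> rat by rewrite pnatr_eq0 -lt0n.
rewrite factS !natrM !natrD; field.
by rewrite nat1r -natrD !nz ?addn_gt0 ?q_gt0.
Qed.

Definition is_dummy (c : cand) : bool := if c is Dum _ then true else false.

Lemma Dum_inj : injective Dum. Proof. by move=> i i' []. Qed.

Lemma mem_D i m : (Dum i \in D m) = (0 < i <= m)%N.
Proof. by rewrite (mem_map Dum_inj) mem_iota; apply/idP/idP; lia. Qed.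

Lemma is_dummy_D c m : c \in D m -> is_dummy c.
Proof. by case/mapP=> i _ ->. Qed.

Lemma uniq_D m : uniq (D m).
Proof. by rewrite (map_inj_uniq Dum_inj) iota_uniq. Qed.

Lemma size_D m : size (D m) = m.
Proof. by rewrite size_map size_iota. Qed.

Lemma map_swapab_D m : map swapab (D m) = D m.
Proof. by rewrite -map_comp. Qed.

Lemma count_mem_D m n : (m <= n)%N -> count (mem (D m)) (D n) = m.
Proof.
move=> le_mn.
have -> : D n = D m ++ map Dum (iota m.+1 (n - m)) by rewrite /D -map_cat -iotaD subnKC.
rewrite count_cat (@eq_in_count _ _ predT (D m)) => [|c /= ->] //.
rewrite (@eq_in_count _ _ pred0 (map Dum _)) => [|_ /mapP[i i_gt_m ->]]; last first.
  by rewrite /= mem_D; apply/negbTE; move: i_gt_m; rewrite mem_iota; lia.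
by rewrite count_predT count_pred0 size_map size_iota addn0.
Qed.

Lemma inter_size_uniq A W : uniq W -> inter_size A W = count (mem A) W.
Proof. by move=> uW; rewrite /inter_size undup_id ?filter_uniq // size_filter. Qed.

Lemma mem_D_no_dummy (s : seq cand) c m : ~~ has is_dummy s -> c \in D m -> c \notin s.
Proof. by move=> s_nodum /is_dummy_D dc; apply: contra s_nodum => cs; apply/hasP; exists c. Qed.

Lemma inter_size_cat_D (h w : seq cand) m n :
  ~~ has is_dummy h -> ~~ has is_dummy w -> uniq w -> (m <= n)%N ->
  inter_size (h ++ D m) (w ++ D n) = (count (mem h) w + m)%N.
Proof.
move=> h_nodum w_nodum uw le_mn; rewrite inter_size_uniq; last first.
  by rewrite cat_uniq uw uniq_D andbT; apply/hasPn => c /(mem_D_no_dummy w_nodum).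
rewrite count_cat; congr (_ + _)%N.
  apply: eq_in_count => c /(contraL (mem_D_no_dummy w_nodum)) /negbTE c_notin_D.
  by rewrite /= mem_cat c_notin_D orbF.
rewrite -[RHS](count_mem_D le_mn); apply: eq_in_count => c.
by move=> /(mem_D_no_dummy h_nodum) /negbTE c_notin_h; rewrite /= mem_cat c_notin_h.
Qed.

Lemma harmS n : harm n.+1 = harm n + n.+1%:R^-1.
Proof. by rewrite /harm big_nat_recr. Qed.

Definition sgn (c : cand) : rat := match c with CA => -1 | CB => 1 | _ => 0 end.

Lemma swap_in_CX_CA n : swap_in (CX :: CA :: D n) CA CB = CB :: CX :: D n.
Proof.
by rewrite /swap_in /=; congr [:: _, _ & _]; apply/all_filterP/allP => c /is_dummy_D; case: c.
Qed.

Lemma harm_swap_gain e c m n : e \in [:: CX; CY] -> c \in [:: CA; CB] -> (m <= n)%N ->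
  harm (inter_size (e :: c :: D m) (swap_in (CX :: CA :: D n) CA CB))
  - harm (inter_size (e :: c :: D m) (CX :: CA :: D n))
  = sgn c / ((e == CX) + m).+1%:R.
Proof.
move=> + + le_mn; rewrite swap_in_CX_CA -[e :: c :: D m]/([:: e; c] ++ D m).
rewrite -[CX :: CA :: D n]/([:: CX; CA] ++ D n) -[CB :: CX :: D n]/([:: CB; CX] ++ D n).
rewrite !inE => /pred2P[]-> /pred2P[]->; rewrite !inter_size_cat_D //=;
  by rewrite ?add0n ?addn0 ?add1n !harmS; ring.
Qed.

Lemma sgn_swapab c : sgn (swapab c) = - sgn c.
Proof. by case: c => *; rewrite /= ?opprK ?oppr0. Qed.

Lemma mem_F j k A : (0 < j)%N -> A \in F j k ->
  exists c m, [/\ A = c :: D m, c \in [:: CA; CB] & (k.-1 - j <= m <= k.-1)%N].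
Proof.
elim: j k A => [|[|j] IH] k A // _.
  rewrite !inE => /pred2P[]->; [exists CA, k.-1 | exists CB, k.-2];
    by split; rewrite ?inE ?eqxx ?orbT //; lia.
rewrite mem_cat => /orP[/mapP[A' /IH[//|c [m [-> c_ab le_m]]] ->] | /IH[//|c [m [-> c_ab le_m]]]].
  exists (swapab c), m; rewrite /= map_swapab_D; split=> //; last lia.
  by move: c_ab; rewrite !inE => /pred2P[]->.
by exists c, m; split=> //; lia.
Qed.

(* The total PAV gain of replacing a by b in El when each voter also approves t
   further committee members (see harm_swap_gain). *)
Definition ab_bias (El : election) (t : nat) : rat :=
  \sum_(A <- El) sgn (head CX A) / (size A + t)%:R.

Lemma ab_bias_swapab El t : ab_bias [seq map swapab A | A <- El] t = - ab_bias El t.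
Proof.
rewrite /ab_bias big_map -sumrN; apply: eq_bigr => -[|c A] _ /=.
  by rewrite mul0r oppr0.
by rewrite size_map sgn_swapab mulNr.
Qed.

Lemma ab_bias_F j k t : (0 < j < k)%N -> ab_bias (F j k) t = delta j (k + t).
Proof.
elim: j k => [|[|j] IH] k // /andP[_ lt_jk].
  case: k lt_jk => [|[|k]] // _.
  rewrite /ab_bias !big_cons big_nil /= !size_map !size_iota delta_ffact /= !addSn.
  rewrite ffactSS ffactn1 natrM addr0 (_ : 1`! = 1)%N //; field.
  by rewrite -!natrD nat1r !pnatr_eq0.
rewrite [F _ _]/= /ab_bias big_cat -!/(ab_bias _ t) ab_bias_swapab !IH; try lia.
have -> : (k.-1 + t = (k + t).-1)%N by lia.
by rewrite (@delta_rec j.+1) /= 1?addrC //; lia.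
Qed.

Lemma Delta_E j k : (2 <= j < k)%N ->
  Delta (E j k) (CX :: CA :: D (k - 2)) CA CB = delta j k.
Proof.
case: j k => [|[|j]] [|[|k]] // /andP[_ lt_jk]; rewrite subn2 /=.
rewrite /Delta /pavsc -sumrB /E big_cat !big_map.
have ballot := @mem_F j.+1 k.+1.
transitivity (- ab_bias (F j.+1 k.+1) 1 + ab_bias (F j.+1 k.+1) 0).
  rewrite /ab_bias -sumrN; congr (_ + _);
    apply: eq_big_seq => _ /ballot[//|c [m [-> c_ab /andP[_ le_m]]]].
    rewrite /= map_swapab_D harm_swap_gain //= ?size_D ?add1n ?addn1 ?sgn_swapab ?mulNr //.
    by move: c_ab; rewrite !inE => /pred2P[]->.
  by rewrite harm_swap_gain //= size_D addn0.
by rewrite !ab_bias_F // addn0 addn1 addrC (@delta_rec j.+1).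
Qed.

Lemma sub_D m n : (m <= n)%N -> {subset D m <= D n}.
Proof. by move=> le_mn _ /mapP[i i_in ->]; rewrite mem_D; move: i_in; rewrite mem_iota; lia. Qed.

Lemma uniq_leq_inter_size (A W s : seq cand) :
  uniq s -> {subset s <= A} -> {subset s <= W} -> (size s <= inter_size A W)%N.
Proof.
move=> us sA sW; apply: uniq_leq_size => // c cs.
by rewrite mem_undup mem_filter sA ?sW.
Qed.

Lemma inter_size_E j k A : (2 <= j < k)%N -> A \in E j k ->
  (k - j.+1 <= inter_size A (CX :: CA :: D (k - 2)))%N.
Proof.
case: j k => [|[|j]] [|[|k]] // /andP[_ lt_jk]; rewrite subn2 /=.
rewrite mem_cat => /orP[] /mapP[_ /mem_F[//|c [m [-> _ /andP[le_m m_le]]]] ->];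
  apply: leq_trans (uniq_leq_inter_size (uniq_D m) _ _); rewrite ?size_D; try lia;
  by move=> d /= dm; rewrite !inE ?map_swapab_D ?dm ?(sub_D m_le) ?orbT.
Qed.

Theorem lemma5 (j k : nat) (hj : (2 <= j)%N) (hjk : (j < k)%N) :
  let W := CX :: CA :: D (k - 2) in
  Delta (E j k) W CA CB = delta j k /\
  (forall A, A \in E j k -> (k - j.+1 <= inter_size A W)%N).
Proof.
have le2jk : (2 <= j < k)%N by rewrite hj hjk.
by split=> [|A]; [exact: Delta_E | exact: inter_size_E].
Qed.
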